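(* Let $\Omega$ be a set, $\Phi$ the family of coherent sets of gambles on $\Omega$ together with $\mathcal{L}(\Omega)$, and $At(\Phi)$ its set of atoms. For all $\mathcal{D}_1,\mathcal{D}_2,\mathcal{D}\in\Phi$ and all $x\in Q$: (1) $At(\mathcal{D}_1\cdot\mathcal{D}_2)=At(\mathcal{D}_1)\cap At(\mathcal{D}_2)$; (2) $At(\mathcal{L}(\Omega))=\emptyset$ and $At(\mathcal{L}^+(\Omega))=At(\Phi)$; (3) $At(\epsilon_x(\mathcal{D}))=\sigma_x(At(\mathcal{D}))$.
   Context: A gamble is a bounded function $\Omega\to\mathbb{R}$; $\mathcal{L}(\Omega)$ is the set of gambles, $\mathcal{L}^+(\Omega)=\{f:f\ge0,f\ne0\}$. A set $\mathcal{D}\subseteq\mathcal{L}(\Omega)$ is coherent if $\mathcal{L}^+(\Omega)\subseteq\mathcal{D}$, $0\notin\mathcal{D}$, and $\mathcal{D}$ is closed under addition and under multiplication by positive reals. $\Phi$ = coherent sets $\cup\{\mathcal{L}(\Omega)\}$; $\mathcal{C}(\mathcal{K})=\bigcap\{\mathcal{D}\in\Phi:\mathcal{K}\subseteq\mathcal{D}\}$; combination $\mathcal{D}_1\cdot\mathcal{D}_2=\mathcal{C}(\mathcal{D}_1\cup\mathcal{D}_2)$. $Q$ is an index set, each $x\in Q$ corresponding to a partition $\mathcal{P}_x$ of $\Omega$, with $\{\mathcal{P}_x:x\in Q\}$ closed under join (partition into nonempty intersections of blocks). $\mathcal{L}_x$ is the set of gambles constant on each block of $\mathcal{P}_x$ and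 $\epsilon_x(\mathcal{D})=\mathcal{C}(\mathcal{D}\cap\mathcal{L}_x)$. Atoms are the maximal coherent sets; $At(\Phi)$ is the set of atoms and $At(\mathcal{D})=\{M\in At(\Phi):\mathcal{D}\subseteq M\}$. For $x\in Q$, the sets $At(\epsilon_x(M))$, $M\in At(\Phi)$, form a partition of $At(\Phi)$; $M\equiv_x M'$ means $M,M'$ lie in the same block of it. For $A\subseteq At(\Phi)$, $\sigma_x(A)=\{M\in At(\Phi):\exists M'\in A,\ M\equiv_x M'\}$. *)

From Stdlib Require Import Reals.
Open Scope R_scope.

Definition pset (T : Type) := T -> Prop.

Section Gambles.
Variable Omega : Type.

Definition gamble (f : Omega -> R) : Prop := exists M : R, forall w, Rabs (f w) <= M.
Definition Lall : pset (Omega -> R) := gamble.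
Definition zero_g : Omega -> R := fun _ => 0.
Definition Lplus : pset (Omega -> R) :=
  fun f => gamble f /\ (forall w, 0 <= f w) /\ f <> zero_g.

Definition subset_g (A B : pset (Omega -> R)) : Prop := forall f, A f -> B f.

Definition coherent (D : pset (Omega -> R)) : Prop :=
  subset_g D Lall /\
  subset_g Lplus D /\
  ~ D zero_g /\
  (forall f g, D f -> D g -> D (fun w => f w + g w)) /\
  (forall (l : R) f, 0 < l -> D f -> D (fun w => l * f w)).

Definition Phi (D : pset (Omega -> R)) : Prop := coherent D \/ D = Lall.

Definition Cl (K : pset (Omega -> R)) : pset (Omega -> R) :=
  fun f => forall D, Phi D -> subset_g K D -> D f.

Definition combine (D1 D2 : pset (Omega -> R)) : pset (Omega -> R) :=
  Cl (fun f => D1 f \/ D2 f).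

Definition atom (M : pset (Omega -> R)) : Prop :=
  coherent M /\ forall M', coherent M' -> subset_g M M' -> M' = M.

Definition At (D : pset (Omega -> R)) : pset (pset (Omega -> R)) :=
  fun M => atom M /\ subset_g D M.
Definition AtPhi : pset (pset (Omega -> R)) := atom.

Definition is_partition (P : pset (pset Omega)) : Prop :=
  (forall B, P B -> exists w, B w) /\
  (forall w, exists B, P B /\ B w /\ forall B', P B' -> B' w -> B' = B).

Definition pjoin (P1 P2 : pset (pset Omega)) : pset (pset Omega) :=
  fun B => exists B1 B2, P1 B1 /\ P2 B2 /\ (exists w, B1 w /\ B2 w) /\
                     B = (fun w => B1 w /\ B2 w).

Definition Lpart (P : pset (pset Omega)) : pset (Omega -> R) :=
  fun f => gamble f /\
           forall B, P B -> forall w w', B w -> B w' -> f w = f w'.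

Definition eps (P : pset (pset Omega)) (D : pset (Omega -> R)) : pset (Omega -> R) :=
  Cl (fun f => D f /\ Lpart P f).

(** M ==_x M' : M and M' lie in the same block {At(eps_x(N)) : N atom}. *)
Definition equiv_x (P : pset (pset Omega)) (M M' : pset (Omega -> R)) : Prop :=
  exists N, atom N /\ At (eps P N) M /\ At (eps P N) M'.

Definition sigma_x (P : pset (pset Omega)) (A : pset (pset (Omega -> R)))
  : pset (pset (Omega -> R)) :=
  fun M => atom M /\ exists M', A M' /\ equiv_x P M M'.

End Gambles.

(* The closure C(K) lies below a coherent set exactly when K does, which gives (1) and, together
   with 0 ∈ L(Ω) and L⁺(Ω) ⊆ every coherent set, also (2).  For (3) the key fact is that an atom
   M contains, for every gamble f ≠ 0, either f or -f.  Hence if N and M' are atoms and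
   N ∩ L_x ⊆ M', then M' ∩ L_x ⊆ N: this yields σ_x(At(D)) ⊆ At(ε_x(D)).  Conversely, for an atom
   M ⊇ D ∩ L_x the cone generated by D and M ∩ L_x is coherent; by Zorn's lemma it lies in an atom
   M' ⊇ D, and M ≡_x M' as witnessed by N := M. *)

From Stdlib Require Import Reals Classical FunctionalExtensionality Lra.
From mathcomp Require boolp classical_sets.

Open Scope R_scope.

Section Coherence.
Variable Omega : Type.
Local Notation G := (Omega -> R).
Local Notation coherent := (coherent Omega).
Local Notation atom := (atom Omega).
Local Notation subset_g := (subset_g Omega).
Local Notation zero_g := (zero_g Omega).
Local Notation Cl := (Cl Omega).
Local Notation At := (At Omega).

Lemma gamble_add (f g : G) :
  gamble Omega f -> gamble Omega g -> gamble Omega (fun w => f w + g w).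
Proof.
  intros [M1 H1] [M2 H2]; exists (M1 + M2); intro w.
  eapply Rle_trans; [apply Rabs_triang|]. specialize (H1 w); specialize (H2 w); lra.
Qed.

Lemma gamble_scale (l : R) (f : G) : gamble Omega f -> gamble Omega (fun w => l * f w).
Proof.
  intros [M H]; exists (Rabs l * M); intro w; rewrite Rabs_mult.
  apply Rmult_le_compat_l; [apply Rabs_pos|apply H].
Qed.

Lemma gamble_zero : gamble Omega zero_g.
Proof. exists 0; intro w; unfold zero_g; rewrite Rabs_R0; lra. Qed.

Section CoherentSet.
Variable D : pset G.
Hypothesis HD : coherent D.

Lemma coherent_gamble f : D f -> gamble Omega f.
Proof. apply HD. Qed.

Lemma coherent_Lplus : subset_g (Lplus Omega) D.
Proof. apply HD. Qed.

Lemma coherent_nonzero : ~ D zero_g.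
Proof. apply HD. Qed.

Lemma coherent_add f g : D f -> D g -> D (fun w => f w + g w).
Proof. apply HD. Qed.

Lemma coherent_scale l f : 0 < l -> D f -> D (fun w => l * f w).
Proof. apply HD. Qed.

Lemma coherent_opp f : D f -> ~ D (fun w => - f w).
Proof.
  intros Hf Hmf; apply coherent_nonzero.
  replace zero_g with (fun w => f w + - f w); [now apply coherent_add|].
  apply functional_extensionality; intro w; unfold zero_g; ring.
Qed.

End CoherentSet.

Lemma Cl_subset_coherent (K M : pset G) :
  coherent M -> subset_g (Cl K) M <-> subset_g K M.
Proof.
  intro HM; split.
  - intros H f Hf; apply H; intros D _ HKD; now apply HKD.
  - intros HKM f Hf; apply Hf; [now left|exact HKM].
Qed.

Lemma At_Cl (K M : pset G) : At (Cl K) M <-> atom M /\ subset_g K M.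
Proof.
  split; intros [HM HKM]; split; try exact HM; now apply (Cl_subset_coherent K M (proj1 HM)).
Qed.

Definition convex_cone (A : pset G) : Prop :=
  (forall f g, A f -> A g -> A (fun w => f w + g w)) /\
  (forall l f, 0 < l -> A f -> A (fun w => l * f w)).

Definition pointed (A : pset G) : pset G := fun f => A f \/ f = zero_g.

Lemma coherent_convex_cone (D : pset G) : coherent D -> convex_cone D.
Proof. intro HD; split; [exact (coherent_add D HD)|exact (coherent_scale D HD)]. Qed.

Lemma add_zero_g (f : G) : (fun w => f w + zero_g w) = f.
Proof. apply functional_extensionality; intro w; unfold zero_g; ring. Qed.

Lemma zero_g_add (f : G) : (fun w => zero_g w + f w) = f.
Proof. apply functional_extensionality; intro w; unfold zero_g; ring. Qed.

Section ConvexCone.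
Variable A : pset G.
Hypothesis HA : convex_cone A.

Lemma cone_add_pointed_l f g : A f -> pointed A g -> A (fun w => f w + g w).
Proof. intros Hf [Hg| ->]; [now apply HA|now rewrite add_zero_g]. Qed.

Lemma cone_add_pointed_r f g : pointed A f -> A g -> A (fun w => f w + g w).
Proof. intros [Hf| ->] Hg; [now apply HA|now rewrite zero_g_add]. Qed.

Lemma pointed_convex_cone : convex_cone (pointed A).
Proof.
  split.
  - intros f g Hf [Hg| ->]; [left; now apply cone_add_pointed_r|now rewrite add_zero_g].
  - intros l f Hl [Hf| ->]; [left; now apply HA|right].
    apply functional_extensionality; intro w; unfold zero_g; ring.
Qed.

End ConvexCone.

Definition cone_extend (C K : pset G) : pset G :=
  fun g => exists c k, pointed C c /\ pointed K k /\ (C c \/ K k) /\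
                       g = (fun w => c w + k w).

Lemma cone_extend_l (C K : pset G) : subset_g C (cone_extend C K).
Proof.
  intros c Hc; exists c, zero_g; split; [now left|split; [now right|split; [now left|]]].
  now rewrite add_zero_g.
Qed.

Lemma cone_extend_r (C K : pset G) : subset_g K (cone_extend C K).
Proof.
  intros k Hk; exists zero_g, k; split; [now right|split; [now left|split; [now right|]]].
  now rewrite zero_g_add.
Qed.

Lemma coherent_cone_extend (C K : pset G) :
  coherent C -> convex_cone K -> subset_g K (Lall Omega) -> ~ K zero_g ->
  (forall k, K k -> ~ C (fun w => - k w)) ->
  coherent (cone_extend C K).
Proof.
  intros HC HK HKL HK0 HKC.
  assert (HCc := coherent_convex_cone C HC).
  assert (Hpgamble : forall A f, subset_g A (Lall Omega) -> pointed A f -> gamble Omega f).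
  { intros A f HAL [Hf| ->]; [now apply HAL|exact gamble_zero]. }
  split; [|split; [|split; [|split]]].
  - intros g [c [k [Hc [Hk [_ ->]]]]].
    apply gamble_add; [apply (Hpgamble C)|apply (Hpgamble K)]; try assumption.
    exact (coherent_gamble C HC).
  - intros g Hg; now apply cone_extend_l, (coherent_Lplus C HC).
  - intros [c [k [Hc [Hk [Hck Hz]]]]].
    assert (Hc_eq : c = (fun w => - k w)).
    { apply functional_extensionality; intro w.
      assert (Hw := f_equal (fun h => h w) Hz); unfold zero_g in Hw; simpl in Hw; lra. }
    subst c; destruct Hk as [Hk| ->].
    + destruct Hc as [Hc|Hc]; [exact (HKC k Hk Hc)|].
      apply HK0; replace zero_g with k; [exact Hk|].
      apply functional_extensionality; intro w.
      assert (Hw := f_equal (fun h => h w) Hc); unfold zero_g in *; simpl in Hw; lra.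
    + destruct Hck as [Hc'|Hk']; [|exact (HK0 Hk')].
      apply (coherent_nonzero C HC); replace zero_g with (fun w => - zero_g w); [exact Hc'|].
      apply functional_extensionality; intro w; unfold zero_g; ring.
  - intros g g' [c [k [Hc [Hk [Hck ->]]]]] [c' [k' [Hc' [Hk' [Hck' ->]]]]].
    exists (fun w => c w + c' w), (fun w => k w + k' w).
    split; [now apply pointed_convex_cone|split; [now apply pointed_convex_cone|split]].
    + destruct Hck as [Hc0|Hk0]; [left|right]; now apply cone_add_pointed_l.
    + apply functional_extensionality; intro w; ring.
  - intros l g Hl [c [k [Hc [Hk [Hck ->]]]]].
    exists (fun w => l * c w), (fun w => l * k w).
    split; [now apply pointed_convex_cone|split; [now apply pointed_convex_cone|split]].
    + destruct Hck as [Hc0|Hk0]; [left; now apply HCc|right; now apply HK].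
    + apply functional_extensionality; intro w; ring.
Qed.

Lemma coherent_chain_union (F : pset (pset G)) :
  (exists X, F X) -> (forall X, F X -> coherent X) ->
  (forall X Y, F X -> F Y -> subset_g X Y \/ subset_g Y X) ->
  coherent (fun f => exists2 X, F X & X f).
Proof.
  intros [X0 HX0] HF Htot.
  assert (Hcommon : forall f g X Y, F X -> F Y -> X f -> Y g ->
                      exists2 Z, F Z & Z f /\ Z g).
  { intros f g X Y HX HY Hf Hg.
    destruct (Htot X Y HX HY) as [HXY|HYX]; [exists Y|exists X]; auto. }
  split; [|split; [|split; [|split]]].
  - intros f [X HX Hf]; exact (coherent_gamble X (HF X HX) f Hf).
  - intros f Hf; exists X0; [exact HX0|exact (coherent_Lplus X0 (HF X0 HX0) f Hf)].
  - intros [X HX Hf]; exact (coherent_nonzero X (HF X HX) Hf).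
  - intros f g [X HX Hf] [Y HY Hg].
    destruct (Hcommon f g X Y HX HY Hf Hg) as [Z HZ [Hf' Hg']].
    exists Z; [exact HZ|exact (coherent_add Z (HF Z HZ) f g Hf' Hg')].
  - intros l f Hl [X HX Hf]; exists X; [exact HX|exact (coherent_scale X (HF X HX) l f Hl Hf)].
Qed.

Lemma coherent_subset_atom (E : pset G) :
  coherent E -> exists M, atom M /\ subset_g E M.
Proof.
  intro HE.
  (* The empty set is admitted because it is the union of the empty chain. *)
  set (P := fun A : pset G => (coherent A /\ subset_g E A) \/ (forall f, ~ A f)).
  destruct (@classical_sets.Zorn_bigcup _ P) as [A [HA Hmax]].
  - intros F HFP Htot.
    destruct (classic (exists X f, F X /\ X f)) as [[X0 [f0 [HX0 Hf0]]]|Hempty].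
    + set (F' := fun X => F X /\ coherent X /\ subset_g E X).
      assert (HF'P : forall X f, F X -> X f -> F' X).
      { intros X f HX Hf; destruct (HFP X HX) as [HXc|HX0']; [now split|now destruct (HX0' f)]. }
      assert (Hunion : (fun f => exists2 X, F X & X f) = (fun f => exists2 X, F' X & X f)).
      { apply boolp.predeqP; intro f; split; intros [X HX Hf]; exists X; try exact Hf.
        - exact (HF'P X f HX Hf).
        - exact (proj1 HX). }
      left; change (coherent (fun f => exists2 X, F X & X f) /\
                    subset_g E (fun f => exists2 X, F X & X f)).
      rewrite Hunion; split.
      * apply coherent_chain_union; [exists X0; exact (HF'P X0 f0 HX0 Hf0)|now intros X []|].
        intros X Y [HX _] [HY _]; exact (Htot X Y HX HY).
      * intros f Hf; exists X0; [exact (HF'P X0 f0 HX0 Hf0)|apply (HF'P X0 f0 HX0 Hf0), Hf].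
    + right; intros f [X HX Hf]; apply Hempty; now exists X, f.
  - assert (HAE : coherent A /\ subset_g E A).
    { destruct HA as [HA|HA]; [exact HA|].
      destruct (classic (subset_g E A)) as [HEA|HEA].
      + assert (A = E) as ->; [|split; [exact HE|now intros f Hf]].
        apply boolp.predeqP; intro f; split; [intro Hf; now destruct (HA f)|apply HEA].
      + exfalso; apply (Hmax E); [split; [intros f Hf; now destruct (HA f)|exact HEA]|].
        left; split; [exact HE|now intros f Hf]. }
    exists A; split; [split; [exact (proj1 HAE)|]|exact (proj2 HAE)].
    intros M' HM' HAM'.
    destruct (classic (subset_g M' A)) as [HM'A|HM'A].
    + apply boolp.predeqP; intro f; split; [apply HM'A|apply HAM'].
    + exfalso; apply (Hmax M'); [now split|].
      left; split; [exact HM'|intros f Hf; apply HAM', (proj2 HAE), Hf].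
Qed.

Lemma atom_total (M : pset G) (f : G) :
  atom M -> gamble Omega f -> f <> zero_g -> M f \/ M (fun w => - f w).
Proof.
  intros [HM Hmax] Hf Hf0.
  destruct (classic (M (fun w => - f w))) as [Hmf|Hmf]; [now right|left].
  set (K := fun g : G => exists l, 0 < l /\ g = (fun w => l * f w)).
  assert (HK : convex_cone K).
  { split.
    - intros g h [l [Hl ->]] [l' [Hl' ->]]; exists (l + l'); split; [lra|].
      apply functional_extensionality; intro w; ring.
    - intros l' g Hl' [l [Hl ->]]; exists (l' * l); split; [now apply Rmult_lt_0_compat|].
      apply functional_extensionality; intro w; ring. }
  assert (Hext : coherent (cone_extend M K)).
  { apply coherent_cone_extend; [exact HM|exact HK| | |].
    - intros g [l [Hl ->]]; now apply gamble_scale.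
    - intros [l [Hl Hz]]; apply Hf0, functional_extensionality; intro w.
      assert (Hw := f_equal (fun h => h w) Hz); unfold zero_g in *; simpl in Hw.
      destruct (Rmult_integral l (f w)); [lra|lra|assumption].
    - intros k [l [Hl ->]] Hk; apply Hmf.
      replace (fun w => - f w) with (fun w => / l * - (l * f w));
        [now apply (coherent_scale M HM); [apply Rinv_0_lt_compat|]|].
      apply functional_extensionality; intro w; field; lra. }
  rewrite <- (Hmax _ Hext (cone_extend_l M K)).
  apply cone_extend_r; exists 1; split; [lra|].
  apply functional_extensionality; intro w; ring.
Qed.

Lemma At_combine (D1 D2 M : pset G) :
  At (combine Omega D1 D2) M <-> At D1 M /\ At D2 M.
Proof.
  unfold combine; rewrite At_Cl; split.
  - intros [HM Hsub]; split; split; try exact HM; intros f Hf; apply Hsub; tauto.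
  - intros [[HM Hs1] [_ Hs2]]; split; [exact HM|]; intros f [Hf|Hf]; auto.
Qed.

Lemma At_Lall (M : pset G) : ~ At (Lall Omega) M.
Proof. intros [HM Hsub]; exact (coherent_nonzero M (proj1 HM) (Hsub _ gamble_zero)). Qed.

Lemma At_Lplus (M : pset G) : At (Lplus Omega) M <-> atom M.
Proof. split; [now intros []|intro HM; split; [exact HM|exact (coherent_Lplus M (proj1 HM))]]. Qed.

Section Subspace.
Variable V : pset G.
Hypothesis V_zero : V zero_g.
Hypothesis V_add : forall f g, V f -> V g -> V (fun w => f w + g w).
Hypothesis V_scale : forall l f, V f -> V (fun w => l * f w).

Local Notation trace D := (fun f => D f /\ V f).

Lemma subspace_opp f : V f -> V (fun w => - f w).
Proof.
  intro Hf; replace (fun w => - f w) with (fun w => -1 * f w); [now apply V_scale|].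
  apply functional_extensionality; intro w; ring.
Qed.

(* An atom [N] holds [f] or [-f]; the latter would put both [f] and [-f] in [M]. *)
Lemma atom_trace_subset (N M : pset G) :
  atom N -> coherent M -> subset_g (trace N) M -> subset_g (trace M) N.
Proof.
  intros HN HM HNM f [Hf HVf].
  assert (Hf0 : f <> zero_g) by (intros ->; exact (coherent_nonzero M HM Hf)).
  destruct (atom_total N f HN (coherent_gamble M HM f Hf) Hf0) as [H|H]; [exact H|exfalso].
  apply (coherent_opp M HM f Hf), HNM; split; [exact H|now apply subspace_opp].
Qed.

Lemma coherent_trace_extend (D M : pset G) :
  coherent D -> coherent M -> subset_g (trace D) M -> coherent (cone_extend D (trace M)).
Proof.
  intros HD HM HDM; apply coherent_cone_extend; [exact HD| | | |].
  - split.
    + intros f g [Hf HVf] [Hg HVg]; split; [now apply (coherent_add M)|now apply V_add].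
    + intros l f Hl [Hf HVf]; split; [now apply (coherent_scale M)|now apply V_scale].
  - intros f [Hf _]; exact (coherent_gamble M HM f Hf).
  - intros [H0 _]; exact (coherent_nonzero M HM H0).
  - intros k [Hk HVk] Hmk; apply (coherent_opp M HM k Hk), HDM.
    split; [exact Hmk|now apply subspace_opp].
Qed.

Lemma At_Cl_trace (D M : pset G) : Phi Omega D ->
  At (Cl (trace D)) M <->
  atom M /\ exists M', At D M' /\
    exists N, atom N /\ At (Cl (trace N)) M /\ At (Cl (trace N)) M'.
Proof.
  intro HD; rewrite At_Cl; split.
  - intros [HM HDM]; split; [exact HM|].
    destruct HD as [HD| ->].
    + (* M itself witnesses M ≡ M' for any atom M' extending the cone of D and M ∩ V. *)
      destruct (coherent_subset_atom _ (coherent_trace_extend D M HD (proj1 HM) HDM))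
        as [M' [HM' Hext]].
      exists M'; split; [split; [exact HM'|intros f Hf; now apply Hext, cone_extend_l]|].
      exists M; split; [exact HM|rewrite !At_Cl; split; split; try assumption].
      * now intros f [Hf _].
      * intros f Hf; now apply Hext, cone_extend_r.
    + exfalso; apply (coherent_nonzero M (proj1 HM)), HDM.
      split; [exact gamble_zero|exact V_zero].
  - intros [HM [M' [[HM' HDM'] [N [HN [HNM HNM']]]]]]; split; [exact HM|].
    rewrite At_Cl in HNM, HNM'.
    intros f [Hf HVf]; apply (proj2 HNM); split; [|exact HVf].
    apply (atom_trace_subset N M' HN (proj1 HM') (proj2 HNM')); split; [now apply HDM'|exact HVf].
Qed.

End Subspace.

Lemma Lpart_zero (P : pset (pset Omega)) : Lpart Omega P zero_g.
Proof. split; [exact gamble_zero|reflexivity]. Qed.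

Lemma Lpart_add (P : pset (pset Omega)) (f g : G) :
  Lpart Omega P f -> Lpart Omega P g -> Lpart Omega P (fun w => f w + g w).
Proof.
  intros [Hf Hfc] [Hg Hgc]; split; [now apply gamble_add|].
  intros B HB w w' Hw Hw'; now rewrite (Hfc B HB w w' Hw Hw'), (Hgc B HB w w' Hw Hw').
Qed.

Lemma Lpart_scale (P : pset (pset Omega)) (l : R) (f : G) :
  Lpart Omega P f -> Lpart Omega P (fun w => l * f w).
Proof.
  intros [Hf Hfc]; split; [now apply gamble_scale|].
  intros B HB w w' Hw Hw'; now rewrite (Hfc B HB w w' Hw Hw').
Qed.

Lemma At_eps (P : pset (pset Omega)) (D M : pset G) : Phi Omega D ->
  At (eps Omega P D) M <-> sigma_x Omega P (At D) M.
Proof.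
  intro HD; exact (At_Cl_trace (Lpart Omega P) (Lpart_zero P) (Lpart_add P) (Lpart_scale P) D M HD).
Qed.

End Coherence.

Theorem theorem5 (Omega : Type) (Q : Type) (Part : Q -> pset (pset Omega))
  (HPart : forall x, is_partition Omega (Part x))
  (Hjoin : forall x y, exists z, Part z = pjoin Omega (Part x) (Part y)) :
  forall (D1 D2 D : pset (Omega -> R)) (x : Q),
    Phi Omega D1 -> Phi Omega D2 -> Phi Omega D ->
    At Omega (combine Omega D1 D2) = (fun M => At Omega D1 M /\ At Omega D2 M) /\
    (At Omega (Lall Omega) = (fun _ => False) /\ At Omega (Lplus Omega) = AtPhi Omega) /\
    At Omega (eps Omega (Part x) D) = sigma_x Omega (Part x) (At Omega D).
Proof.
  intros D1 D2 D x _ _ HD.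
  split; [|split; [split|]]; apply boolp.predeqP; intro M.
  - apply At_combine.
  - split; [apply At_Lall|intros []].
  - apply At_Lplus.
  - now apply At_eps.
Qed.
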